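(* Let $\Sigma=\{0,1,2,3\}$ and $L=\{0^k1^l2^m3^n\mid k,l,m,n\in\mathbb N_0,\ (l\ge2\text{ and }m\ge3)\text{ or }(l\ge3\text{ and }m\ge2)\}$. Then no DACA with time complexity $3$ (i.e., accepting every word of $L$ at some step $t<3$... more precisely, every $x\in L$ of length $n$ at some step $t< T(n)$ with $T\equiv3$) accepts $L$, whereas there is a one-sided $7/8$-error PACA with time complexity $3$ that accepts $L$.
   Context: A (bounded, one-dimensional) CA has state set $Q$, boundary symbol $\$\notin Q$, local transition function $\delta\colon Q_\$\times Q\times Q_\$\to Q$; on $s\in Q^n$, $\Delta(s)=\delta(\$,s_0,s_1)\cdots\delta(s_{n-2},s_{n-1},\$)$. A DACA has input alphabet $\Sigma\subseteq Q$ and accepting states $A\subseteq Q$; it accepts $x\in\Sigma^n$ iff $\Delta^t(x)\in A^n$ for some $t$; it has time complexity $T$ if every accepted $x$ of length $n$ satisfies $\Delta^t(x)\in A^n$ for some $t<T(n)$. A PACA is like a DACA but with two local transition functions $\delta_0,\delta_1$: at each step each cell independently tosses a fair coin $c$ and updates by $\delta_c$; a computation is accepting if at some step all cells are in $A$; time complexity $T$ means every accepting computation on an input of length $n$ first reaches $A^n$ at a step $<T(n)$. For $p\in[0,1)$, a one-sided $p$-error PACA for $L$ accepts every $x\in L$ with probability $\ge1-p$ and every $x\notin L$ with probability $0$. *)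

From mathcomp Require Import all_boot all_order all_algebra.
Set Implicit Arguments. Unset Strict Implicit. Unset Printing Implicit Defensive.
Import Order.TTheory GRing.Theory Num.Theory.

Definition sym (k : nat) : 'I_4 := inord k.

Definition inL (x : seq 'I_4) : Prop :=
  exists k l m n : nat,
    x = nseq k (sym 0) ++ nseq l (sym 1) ++ nseq m (sym 2) ++ nseq n (sym 3)
    /\ ((2 <= l /\ 3 <= m) \/ (3 <= l /\ 2 <= m)).

Section CA.
Variable Q : finType.
(* The boundary symbol $ is represented by None : option Q. *)

Definition stepi (f : nat -> option Q -> Q -> option Q -> Q) (s : seq Q) : seq Q :=
  [seq f p.1 p.2.1.1 p.2.1.2 p.2.2
  | p <- zip (iota 0 (size s))
             (zip (zip (None :: map Some s) s) (rcons (behead (map Some s)) None))].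

Definition Delta (delta : option Q -> Q -> option Q -> Q) : seq Q -> seq Q :=
  stepi (fun _ => delta).

Definition allA (A : {set Q}) (s : seq Q) : bool := all (fun q => q \in A) s.

Definition daca_accepts (inp : 'I_4 -> Q) (delta : option Q -> Q -> option Q -> Q)
  (A : {set Q}) (x : seq 'I_4) : Prop :=
  exists t, allA A (iter t (Delta delta) (map inp x)).

Definition daca_time (inp : 'I_4 -> Q) (delta : option Q -> Q -> option Q -> Q)
  (A : {set Q}) (T : nat -> nat) : Prop :=
  forall x : seq 'I_4, daca_accepts inp delta A x ->
    exists t, t < T (size x) /\ allA A (iter t (Delta delta) (map inp x)).

Definition daca_recognizes (inp : 'I_4 -> Q) (delta : option Q -> Q -> option Q -> Q)
  (A : {set Q}) (Lang : seq 'I_4 -> Prop) : Prop :=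
  forall x : seq 'I_4, x != [::] -> (daca_accepts inp delta A x <-> Lang x).

(* coins j i = coin tossed by cell i in the update leading from step j to j+1. *)
Fixpoint paca_run (d0 d1 : option Q -> Q -> option Q -> Q) (coins : nat -> nat -> bool)
  (s : seq Q) (t : nat) : seq Q :=
  match t with
  | 0 => s
  | t'.+1 => stepi (fun i => if coins t' i then d1 else d0) (paca_run d0 d1 coins s t')
  end.

Definition paca_time (inp : 'I_4 -> Q) (d0 d1 : option Q -> Q -> option Q -> Q)
  (A : {set Q}) (T : nat -> nat) : Prop :=
  forall (x : seq 'I_4) (coins : nat -> nat -> bool) (t : nat),
    allA A (paca_run d0 d1 coins (map inp x) t) ->
    exists t', t' < T (size x) /\ allA A (paca_run d0 d1 coins (map inp x) t').

(* Coin sequence determined by a finite table c (other coins irrelevant). *)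
Definition coins_of (T n : nat) (c : {ffun 'I_T * 'I_n -> bool}) : nat -> nat -> bool :=
  fun j i => oapp (fun j' : 'I_T => oapp (fun i' : 'I_n => c (j', i')) false (insub i))
                  false (insub j).

Definition prob_within (inp : 'I_4 -> Q) (d0 d1 : option Q -> Q -> option Q -> Q)
  (A : {set Q}) (x : seq 'I_4) (T : nat) : rat :=
  (#|[set c : {ffun 'I_T * 'I_(size x) -> bool} |
      [exists t : 'I_T, allA A (paca_run d0 d1 (coins_of c) (map inp x) t)]]|%:R
   / (2 ^ (T * size x))%:R)%R.

(* Pr[accept] = sup_T prob_within T (continuity from below); these express
   Pr[accept] >= r and Pr[accept] = 0. *)
Definition acc_prob_ge (inp : 'I_4 -> Q) (d0 d1 : option Q -> Q -> option Q -> Q)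
  (A : {set Q}) (x : seq 'I_4) (r : rat) : Prop :=
  forall e : rat, (0 < e)%R -> exists T, (r - e <= prob_within inp d0 d1 A x T)%R.

Definition acc_prob_zero (inp : 'I_4 -> Q) (d0 d1 : option Q -> Q -> option Q -> Q)
  (A : {set Q}) (x : seq 'I_4) : Prop :=
  forall T, prob_within inp d0 d1 A x T = 0%R.

Definition paca_one_sided (inp : 'I_4 -> Q) (d0 d1 : option Q -> Q -> option Q -> Q)
  (A : {set Q}) (p : rat) (Lang : seq 'I_4 -> Prop) : Prop :=
  forall x : seq 'I_4, x != [::] ->
    (Lang x -> acc_prob_ge inp d0 d1 A x (1 - p)%R) /\
    (~ Lang x -> acc_prob_zero inp d0 d1 A x).

End CA.

From mathcomp Require Import all_boot all_order all_algebra.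
From mathcomp Require Import zify lra.

(* Within fewer than three steps a cell of a DACA only sees the letters at distance at most
   two from it. Every such window of 0^3 1^2 2^2 3^3, which is not in L, also occurs in
   0^3 1^2 2^3 3^3 or in 0^3 1^3 2^2 3^3, which are in L; at steps 0 and 1 a single one of
   them already covers all windows, at step 2 the two together do. So a DACA accepting L
   within three steps also accepts 0^3 1^2 2^2 3^3.
   A PACA can instead guess which alternative of L to check. At step 0 every cell records
   the letters of its neighbours and keeps its coin; at step 1 every cell checks its window
   of radius two, the coin of the last 1 deciding whether l >= 3, m >= 2 or l >= 2, m >= 3
   is verified; the verdict is read off at step 2 and only there. A word of L is accepted
   whenever that one coin is right, i.e. with probability at least 1/2, and a word outside L
   never. *)

Lemma onth_mkseq T (f : nat -> T) n i : onth (mkseq f n) i = if i < n then Some (f i) else None.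
Proof.
case: ltnP => hi; last by rewrite onth_default ?size_mkseq.
by rewrite onthE (nth_map (f 0)) ?size_mkseq ?nth_mkseq.
Qed.

Section Stepi.
Variable Q : finType.

Lemma size_stepi f (s : seq Q) : size (stepi f s) = size s.
Proof.
by rewrite /stepi size_map !size_zip size_iota /= size_map size_rcons size_behead size_map; lia.
Qed.

Lemma nth_stepi f (s : seq Q) d i : i < size s ->
  nth d (stepi f s) i =
  f i (nth None (None :: map Some s) i) (nth d s i) (nth None (map Some s) i.+1).
Proof.
move=> hi.
have hz : i < size (zip (iota 0 (size s))
             (zip (zip (None :: map Some s) s) (rcons (behead (map Some s)) None))).
  by rewrite !size_zip size_iota /= size_map size_rcons size_behead size_map; lia.
rewrite /stepi (nth_map (0, ((None, d), None))) // nth_zip_cond hz /= nth_iota // add0n.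
rewrite nth_zip_cond ifT; last first.
  by rewrite !size_zip /= size_map size_rcons size_behead size_map; lia.
rewrite /= nth_zip_cond ifT; last by rewrite size_zip /= size_map; lia.
by rewrite /= nth_rcons_default nth_behead.
Qed.

Lemma onth_stepi f (s : seq Q) i :
  onth (stepi f s) i =
  omap (fun q => f i (if i is j.+1 then onth s j else None) q (onth s i.+1)) (onth s i).
Proof.
case: (ltnP i (size s)) => hi; last by rewrite (onth_default hi) onth_default ?size_stepi.
case Es: (onth s i) => [q|]; last by move: hi; rewrite -onthTE Es.
rewrite onthE (nth_map q) ?size_stepi // nth_stepi // -!onthE (onth_nth _ _ _ _ Es).
by case: i {hi Es} => [|j] //=; rewrite onthE.
Qed.
End Stepi.

Section DacaWindows.
Variables (Q : finType) (delta : option Q -> Q -> option Q -> Q) (A : {set Q}) (a b c d : Q).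

Let w_lm := [:: a; a; a; b; b; c; c; c; d; d; d].
Let w_ml := [:: a; a; a; b; b; b; c; c; d; d; d].
Let w := [:: a; a; a; b; b; c; c; d; d; d].

(* Both lemmas are checked by unfolding [Delta] symbolically: each conjunct of the goal
   is, syntactically, a conjunct of one of the hypotheses. *)
Ltac split_hyps := repeat match goal with H : is_true (_ && _) |- _ => case/andP: H => ? ? end.

Lemma accepting_step2_glue :
  allA A (iter 2 (Delta delta) w_lm) -> allA A (iter 2 (Delta delta) w_ml) ->
  allA A (iter 2 (Delta delta) w).
Proof. rewrite /allA /Delta /stepi /= => ? ?; split_hyps; by repeat (apply/andP; split). Qed.

Lemma accepting_early_transfer t s : t < 2 -> s = w_lm \/ s = w_ml ->
  allA A (iter t (Delta delta) s) -> allA A (iter t (Delta delta) w).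
Proof.
case: t => [|[|//]] _ [->|->]; rewrite /allA /Delta /stepi /= => ?; split_hyps;
  by repeat (apply/andP; split).
Qed.

Lemma accepting_within3_glue :
  (exists2 t, t < 3 & allA A (iter t (Delta delta) w_lm)) ->
  (exists2 t, t < 3 & allA A (iter t (Delta delta) w_ml)) ->
  exists t, allA A (iter t (Delta delta) w).
Proof.
move=> [t1 lt1 acc1] [t2 lt2 acc2].
have [early1|late1] := ltnP t1 2.
  by exists t1; apply: accepting_early_transfer early1 (or_introl erefl) acc1.
have [early2|late2] := ltnP t2 2.
  by exists t2; apply: accepting_early_transfer early2 (or_intror erefl) acc2.
have t1_2 : t1 = 2 by lia.
have t2_2 : t2 = 2 by lia.
by exists 2; apply: accepting_step2_glue; [rewrite -t1_2 | rewrite -t2_2].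
Qed.
End DacaWindows.

Definition block_word k l m n : seq 'I_4 :=
  nseq k (sym 0) ++ nseq l (sym 1) ++ nseq m (sym 2) ++ nseq n (sym 3).

Lemma symK k : k < 4 -> nat_of_ord (sym k) = k.
Proof. exact: inordK. Qed.

Lemma sym_eq i j : i < 4 -> j < 4 -> (sym i == sym j) = (i == j).
Proof. by move=> hi hj; apply/eqP/eqP => [/(congr1 val)|->]; rewrite /= ?symK. Qed.

Lemma size_block_word k l m n : size (block_word k l m n) = k + l + m + n.
Proof. by rewrite /block_word !size_cat !size_nseq !addnA. Qed.

Lemma count_block_word k l m n j : j < 4 ->
  count_mem (sym j) (block_word k l m n) = nth 0 [:: k; l; m; n] j.
Proof.
move=> hj; rewrite !count_cat !count_nseq /= !sym_eq //.
by case: j hj => [|[|[|[|]]]] //= _; lia.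
Qed.

Lemma inL_block_word k l m n :
  inL (block_word k l m n) <-> (2 <= l /\ 3 <= m) \/ (3 <= l /\ 2 <= m).
Proof.
split=> [[k' [l' [m' [n' [E shape]]]]]|]; last by exists k, l, m, n.
have E' : block_word k l m n = block_word k' l' m' n' := E.
have := congr1 (count_mem (sym 1)) E'; have := congr1 (count_mem (sym 2)) E'.
by rewrite !count_block_word //= => -> ->.
Qed.

Lemma sorted_block_word (x : seq 'I_4) : sorted (fun a b : 'I_4 => a <= b) x ->
  exists k l m n, x = block_word k l m n.
Proof.
elim: x => [|a x IH]; first by exists 0, 0, 0, 0.
move=> sx; have [k [l [m [n E]]]] := IH (path_sorted sx).
have ea : a = sym a by rewrite /sym inord_val.
move: sx; rewrite {}E {}ea; case: (nat_of_ord a) (ltn_ord a) => [|[|[|[|?]]]] // _.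
- by exists k.+1, l, m, n.
- case: k => [|k] /=; last by rewrite !symK.
  by exists 0, l.+1, m, n.
- case: k => [|k] /=; last by rewrite !symK.
  case: l => [|l] /=; last by rewrite !symK.
  by exists 0, 0, m.+1, n.
- case: k => [|k] /=; last by rewrite !symK.
  case: l => [|l] /=; last by rewrite !symK.
  case: m => [|m] /=; last by rewrite !symK.
  by exists 0, 0, 0, n.+1.
Qed.

Lemma no_daca_time3 :
  ~ exists (Q : finType) (inp : 'I_4 -> Q) (delta : option Q -> Q -> option Q -> Q)
      (A : {set Q}),
      injective inp /\ daca_recognizes inp delta A inL /\ daca_time inp delta A (fun _ => 3).
Proof.
case=> Q [inp [delta [A [_ [recognizes time3]]]]].
have accepted k l m n : (2 <= l /\ 3 <= m) \/ (3 <= l /\ 2 <= m) ->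
    exists2 t, t < 3 & allA A (iter t (Delta delta) (map inp (block_word k l m n))).
  move=> shape; have ne : block_word k l m n != [::].
    by rewrite -size_eq0 size_block_word; case: shape => [[]|[]]; lia.
  have [t [lt3 acc]] := time3 _ (proj2 (recognizes _ ne) (proj2 (inL_block_word _ _ _ _) shape)).
  by exists t.
have [t acc] := @accepting_within3_glue Q delta A (inp (sym 0)) (inp (sym 1)) (inp (sym 2))
  (inp (sym 3)) (accepted 3 2 3 3 (or_introl (conj isT isT)))
  (accepted 3 3 2 3 (or_intror (conj isT isT))).
have /inL_block_word : inL (block_word 3 2 2 3).
  by apply/(recognizes (block_word 3 2 2 3) isT); exists t.
by case=> [[]|[]].
Qed.

(* Phase, letters of the left neighbour, of the cell and of the right neighbour, and a bit:
   the coin of step 0 in phase 1, the verdict in phase 2. *)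
Definition pstate := ('I_4 * option 'I_4 * option 'I_4 * option 'I_4 * bool)%type.
Definition phase (q : pstate) : nat := q.1.1.1.1.
Definition lsym (q : pstate) : option 'I_4 := q.1.1.1.2.
Definition csym (q : pstate) : option 'I_4 := q.1.1.2.
Definition rsym (q : pstate) : option 'I_4 := q.1.2.
Definition pbit (q : pstate) : bool := q.2.
Definition pst (p : nat) l c r b : pstate := (inord p, l, c, r, b).

Definition symcode (o : option 'I_4) : nat := if o is Some a then nat_of_ord a else 4.

(* [l2 l1 c r1 r2] codes the letters around a cell (4 = outside the word). Together the
   windows force the shape 0^k 1^l 2^m 3^n with l, m >= 1; the coin [b] of the last 1 then
   selects the alternative of L: l >= 3 and m >= 2 are checked by that cell when [b] is set,
   l >= 2 and m >= 3 by its right neighbour, which reads the coin as [bl], otherwise. *)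
Definition window_ok (l2 l1 c r1 r2 : nat) (b bl : bool) : bool :=
  [&& (l1 == 4) ==> (c <= 1), (r1 == 4) ==> (2 <= c),
      (r1 != 4) ==> ((r1 == c) || (r1 == c.+1)),
      [&& c == 1, r1 == 2 & b] ==> [&& l2 == 1, l1 == 1 & r2 == 2] &
      [&& l1 == 1, c == 2 & ~~ bl] ==> [&& l2 == 1, r1 == 2 & r2 == 2]].

Definition pdelta (b : bool) (L : option pstate) (C : pstate) (R : option pstate) : pstate :=
  match phase C with
  | 0 => pst 1 (obind csym L) (csym C) (obind csym R) b
  | 1 => pst 2 None None None
           (window_ok (symcode (obind lsym L)) (symcode (lsym C)) (symcode (csym C))
              (symcode (rsym C)) (symcode (obind rsym R)) (pbit C) (oapp pbit false L))
  | _ => pst 3 None None None false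
  end.

Definition pinp (a : 'I_4) : pstate := pst 0 None (Some a) None false.
Definition pacc : {set pstate} := [set q | (phase q == 2) && pbit q].

Lemma phase_pst p l c r b : p < 4 -> phase (pst p l c r b) = p.
Proof. exact: inordK. Qed.

Lemma pinp_inj : injective pinp.
Proof. by move=> a b []. Qed.

Lemma pdelta_coin b : (if b then pdelta true else pdelta false) = pdelta b.
Proof. by case: b. Qed.

Lemma obind_csym_pinp o : obind csym (omap pinp o) = o.
Proof. by case: o. Qed.

Lemma phase_pdelta b L C R : phase (pdelta b L C R) = minn (phase C).+1 3.
Proof.
by rewrite /pdelta; case: (phase C) (ltn_ord C.1.1.1.1) => [|[|[|[|]]]] //; rewrite phase_pst.
Qed.

Notation prun := (paca_run (pdelta false) (pdelta true)).

Lemma phase_prun coins s t : all (fun q => phase q == 0) s ->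
  all (fun q => phase q == minn t 3) (prun coins s t).
Proof.
move=> s0; elim: t => //= t IH; apply/allP => q /onthP [i].
rewrite onth_stepi pdelta_coin; case Ei: (onth _ i) => [c|] //= [<-].
have /eqP phc : phase c == minn t 3 by apply: (allP IH); apply/onthP; exists i.
by rewrite phase_pdelta phc; apply/eqP; lia.
Qed.

Lemma size_prun coins s t : size (prun coins s t) = size s.
Proof. by elim: t => //= t IH; rewrite size_stepi. Qed.

Lemma prun_accepting_step2 coins x t : x != [::] ->
  allA pacc (prun coins (map pinp x) t) -> t = 2.
Proof.
move=> nx /allP acc.
have s0 : all (fun q => phase q == 0) (map pinp x).
  by rewrite all_map; apply/allP => a _ /=; rewrite phase_pst.
have [q qr] : {q | q \in prun coins (map pinp x) t}.
  case: (prun _ _ _) (size_prun coins (map pinp x) t) => [|q r]; last by exists q; rewrite inE eqxx.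
  by rewrite size_map => /esym/eqP; rewrite size_eq0 (negbTE nx).
move: (acc q qr) (allP (phase_prun coins _ t s0) q qr); rewrite inE => /andP [/eqP -> _] /eqP.
lia.
Qed.

(* [symat x i.+2] is the code of the i-th letter of [x], so that the window of cell [i]
   is [symat x i], ..., [symat x i.+4]. *)
Definition symat (x : seq 'I_4) j : nat := symcode (if j is j'.+2 then onth x j' else None).

Lemma symat_nth x i : i < size x -> symat x i.+2 = nth (sym 0) x i.
Proof.
move=> hi; change (symcode (onth x i) = nth (sym 0) x i); rewrite -odflt_onth.
by case E: (onth x i) => [a|] //; move: hi; rewrite -onthTE E.
Qed.

Lemma symat_block_word k l m n j : let v := symat (block_word k l m n) j in
  (v = 4 /\ (j < 2 \/ k + l + m + n + 2 <= j)) \/ (v = 0 /\ 2 <= j < k + 2) \/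
  (v = 1 /\ k + 2 <= j < k + l + 2) \/ (v = 2 /\ k + l + 2 <= j < k + l + m + 2) \/
  (v = 3 /\ k + l + m + 2 <= j < k + l + m + n + 2).
Proof.
case: j => [|[|j]]; [by left; split; [|left] .. |].
rewrite /symat /block_word !onth_cat !size_nseq !onth_nseq.
by repeat case: ifP => ?; rewrite /symcode ?symK //; lia.
Qed.

Section Runs.
Variables (coins : nat -> nat -> bool) (x : seq 'I_4).

Definition left_coin i := if i is j.+1 then coins 0 j else false.

Definition run_step1 : seq pstate :=
  mkseq (fun i => pst 1 (if i is j.+1 then onth x j else None) (onth x i) (onth x i.+1)
                      (coins 0 i)) (size x).

Definition run_step2 : seq pstate :=
  mkseq (fun i => pst 2 None None None
    (window_ok (symat x i) (symat x i.+1) (symat x i.+2) (symat x i.+3) (symat x i.+4)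
               (coins 0 i) (left_coin i))) (size x).

Lemma prun1 : prun coins (map pinp x) 1 = run_step1.
Proof.
apply: eq_from_onth => i; rewrite /= onth_stepi pdelta_coin onth_mkseq !onth_map -onthTE.
case: (onth x i) => [a|] //=; rewrite /pdelta phase_pst //; congr (Some (pst _ _ _ _ _)).
  by case: i => //= j; rewrite onth_map obind_csym_pinp.
by rewrite obind_csym_pinp.
Qed.

Lemma left_run_step1 i : i < size x ->
  let L := if i is j.+1 then onth run_step1 j else None in
  symcode (obind lsym L) = symat x i /\ oapp pbit false L = left_coin i.
Proof. by case: i => [|j] hj //; rewrite /run_step1 onth_mkseq ltnW. Qed.

Lemma right_run_step1 i : symcode (obind rsym (onth run_step1 i.+1)) = symat x i.+4.
Proof.
rewrite /run_step1 onth_mkseq; case: ltnP => // hi.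
by change (4 = symcode (onth x i.+2)); rewrite onth_default //; lia.
Qed.

Lemma prun2 : prun coins (map pinp x) 2 = run_step2.
Proof.
apply: eq_from_onth => i.
have -> : prun coins (map pinp x) 2 =
  stepi (fun i => if coins 1 i then pdelta true else pdelta false)
    (prun coins (map pinp x) 1) by [].
rewrite prun1 onth_stepi pdelta_coin [onth run_step1 i]onth_mkseq [onth run_step2 i]onth_mkseq.
case: (ltnP i (size x)) => hi //; have [lsymL pbitL] := left_run_step1 _ hi.
by rewrite /= /pdelta phase_pst // lsymL pbitL right_run_step1.
Qed.
End Runs.

Lemma allA_run_step2 coins x : allA pacc (run_step2 coins x) =
  all (fun i => window_ok (symat x i) (symat x i.+1) (symat x i.+2) (symat x i.+3)
                          (symat x i.+4) (coins 0 i) (left_coin coins i))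
      (iota 0 (size x)).
Proof.
by rewrite /allA /run_step2 /mkseq all_map; apply: eq_all => i; rewrite /= inE phase_pst.
Qed.

Lemma block_word_accepted coins k l m n : (2 <= l /\ 3 <= m) \/ (3 <= l /\ 2 <= m) ->
  coins 0 (k + l - 1) = (3 <= l) -> allA pacc (run_step2 coins (block_word k l m n)).
Proof.
move=> shape guess; rewrite allA_run_step2; apply/allP => i.
rewrite mem_iota size_block_word add0n => hi.
have := symat_block_word k l m n i; have := symat_block_word k l m n i.+1.
have := symat_block_word k l m n i.+2; have := symat_block_word k l m n i.+3.
have := symat_block_word k l m n i.+4.
set w := block_word k l m n => /= h4 h3 h2 h1 h0.
apply/and5P; split; apply/implyP.
- by move=> /eqP e; lia.
- by move=> /eqP e; lia.
- move=> /eqP e; apply/orP.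
  have [->|->] : symat w i.+3 = symat w i.+2 \/ symat w i.+3 = (symat w i.+2).+1 by lia.
  + by left.
  + by right.
- move=> /and3P [/eqP e2 /eqP e3 b]; have ei : i = k + l - 1 by lia.
  by move: b; subst i; rewrite guess => b; apply/and3P; split; apply/eqP; lia.
- move=> /and3P [/eqP e1 /eqP e2 b]; have ei : i = k + l by lia.
  have left_guess : left_coin coins i = (3 <= l).
    have kl : 0 < k + l by lia.
    by rewrite ei -guess; case: (k + l) kl => // j _; rewrite subn1.
  by move: b; rewrite left_guess; subst i => b; apply/and3P; split; apply/eqP; lia.
Qed.

Lemma block_word_windows_shape coins k l m n : 0 < k + l + m + n ->
  let w := block_word k l m n in
  (forall i, i < k + l + m + n -> window_ok (symat w i) (symat w i.+1) (symat w i.+2)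
     (symat w i.+3) (symat w i.+4) (coins 0 i) (left_coin coins i)) ->
  (2 <= l /\ 3 <= m) \/ (3 <= l /\ 2 <= m).
Proof.
move=> nonempty w ok; have at_w := symat_block_word k l m n; rewrite -/w /= in at_w.
have starts_low : 0 < k + l.
  have /and5P [/implyP first _ _ _ _] := ok 0 nonempty.
  by have := at_w 2; have := at_w 1; move: first; lia.
have ends_high : 0 < m + n.
  have /and5P [_ /implyP last _ _ _] := ok (k + l + m + n).-1 ltac:(lia).
  by have := at_w (k + l + m + n).-1.+3; have := at_w (k + l + m + n).-1.+2; move: last; lia.
pose p := k + l - 1.
have /and5P [_ _ /implyP step /implyP guess_l _] := ok p ltac:(lia).
have [v1 v2] : symat w p.+2 = 1 /\ symat w p.+3 = 2.
  by have := at_w p.+2; have := at_w p.+3; move: step; lia.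
have [l_pos m_pos] : 0 < l /\ 0 < m.
  by have := at_w p.+2; have := at_w p.+3; move: v1 v2; clear; lia.
case coin: (coins 0 p).
  move: guess_l; rewrite v1 v2 coin /=.
  by have := at_w p; have := at_w p.+4; clear; lia.
have /and5P [_ _ _ _ /implyP guess_r] := ok (k + l) ltac:(lia).
have left_off : left_coin coins (k + l) = false.
  by rewrite -coin /p; case: (k + l) starts_low => // j _; rewrite subn1.
have l1 : symat w (k + l).+1 = 1 by have := at_w (k + l).+1; move: l_pos m_pos; clear; lia.
have c2 : symat w (k + l).+2 = 2 by have := at_w (k + l).+2; move: l_pos m_pos; clear; lia.
move: guess_r; rewrite left_off l1 c2 /=.
by have := at_w (k + l); have := at_w (k + l).+4; clear; lia.
Qed.

Lemma run_step2_accepted_inL coins x : x != [::] -> allA pacc (run_step2 coins x) -> inL x.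
Proof.
move=> nx; rewrite allA_run_step2 => /allP ok.
have win i : i < size x -> window_ok (symat x i) (symat x i.+1) (symat x i.+2)
    (symat x i.+3) (symat x i.+4) (coins 0 i) (left_coin coins i).
  by move=> hi; apply: ok; rewrite mem_iota.
have [k [l [m [n Ex]]]] : exists k l m n, x = block_word k l m n.
  apply: sorted_block_word; apply/(sortedP (sym 0)) => i hi.
  have /and5P [_ _ /implyP step _ _] := win i (ltnW hi).
  move: step; rewrite !symat_nth ?(ltnW hi) //.
  by have := ltn_ord (nth (sym 0) x i.+1); lia.
move: nx win; rewrite Ex -size_eq0 size_block_word => nx win.
by apply/inL_block_word; apply: (block_word_windows_shape coins k l m n _ win); lia.
Qed.

Lemma paca_time3 : paca_time pinp (pdelta false) (pdelta true) pacc (fun _ => 3%N).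
Proof.
move=> x coins t acc; have [->|nx] := eqVneq x [::]; first by exists 0%N.
by exists t; split; rewrite // (prun_accepting_step2 _ _ _ nx acc).
Qed.

Lemma coins_ofE {T n} (c : {ffun 'I_T * 'I_n -> bool}) {j i} (hj : j < T) (hi : i < n) :
  coins_of c j i = c (Ordinal hj, Ordinal hi).
Proof.
rewrite /coins_of; case: insubP => [j' _ ej|/negP[]//]; case: insubP => [i' _ ei|/negP[]//].
by congr (c (_, _)); apply: val_inj.
Qed.

Lemma card_ffun_le_double_fixed (T : finType) (z : T) (b : bool) :
  #|{ffun T -> bool}| <= 2 * #|[set c : {ffun T -> bool} | c z == b]|.
Proof.
set S := [set c : {ffun T -> bool} | c z == b].
pose flip (c : {ffun T -> bool}) := [ffun y => if y == z then ~~ c y else c y].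
have flipK : involutive flip.
  by move=> c; apply/ffunP => y; rewrite !ffunE; case: eqP => // _; rewrite negbK.
have : #|~: S| <= #|S|.
  rewrite -(card_imset _ (inv_inj flipK)); apply: subset_leq_card.
  apply/subsetP => c' /imsetP [c]; rewrite !inE => cz ->.
  by rewrite ffunE eqxx; move: cz; case: (c z); case: (b).
by rewrite -(cardsC S); lia.
Qed.

Section Probability.
Import GRing.Theory Num.Theory.
Local Open Scope ring_scope.

Lemma half_le_ratio_fixed {T : finType} (z : T) (b : bool) (S : {set {ffun T -> bool}}) :
  [set c : {ffun T -> bool} | c z == b] \subset S ->
  1 / 2 <= #|S|%:R / #|{ffun T -> bool}|%:R :> rat.
Proof.
move=> fixS; have pos : (0 : rat) < #|{ffun T -> bool}|%:R.
  by rewrite ltr0n card_ffun card_bool expn_gt0.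
have : #|{ffun T -> bool}|%:R <= 2 * #|S|%:R :> rat.
  rewrite -natrM ler_nat (leq_trans (card_ffun_le_double_fixed _ z b)) //.
  by rewrite leq_mul2l subset_leq_card.
rewrite ler_pdivlMr //; lra.
Qed.

Lemma prob_within3_ge_half k l m n : (2 <= l /\ 3 <= m)%N \/ (3 <= l /\ 2 <= m)%N ->
  1 / 2 <= prob_within pinp (pdelta false) (pdelta true) pacc (block_word k l m n) 3.
Proof.
move=> shape; rewrite /prob_within.
set N := size (block_word k l m n).
have border : (k + l - 1 < N)%N by rewrite /N size_block_word; case: shape => -[]; lia.
have -> : (2 ^ (3 * N))%N = #|{ffun 'I_3 * 'I_N -> bool}|.
  by rewrite card_ffun card_bool card_prod !card_ord.
apply: (half_le_ratio_fixed (Ordinal (isT : (0 < 3)%N), Ordinal border) (3 <= l)%N).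
apply/subsetP => c; rewrite !inE => /eqP guess; apply/existsP; exists ord_max.
rewrite (_ : nat_of_ord ord_max = 2%N) // prun2; apply: block_word_accepted shape _.
by rewrite (coins_ofE c (isT : (0 < 3)%N) border).
Qed.

Lemma prob_within_outside_L x T : x != [::] -> ~ inL x ->
  prob_within pinp (pdelta false) (pdelta true) pacc x T = 0.
Proof.
move=> nx notL; rewrite /prob_within.
set S := [set c | _]; suff -> : S = set0 by rewrite cards0 mul0r.
apply/setP => c; rewrite !inE; apply/negbTE/existsP => -[t acc].
have t2 := prun_accepting_step2 _ _ _ nx acc.
move: acc; rewrite t2 prun2 => acc.
exact: notL (run_step2_accepted_inL _ _ nx acc).
Qed.

Lemma paca_one_sided_7_8 : paca_one_sided pinp (pdelta false) (pdelta true) pacc (7%:R / 8%:R) inL.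
Proof.
move=> x nx; split; last by move=> notL T; apply: prob_within_outside_L.
case=> k [l [m [n [-> shape]]]] e e_pos; exists 3%N.
have := prob_within3_ge_half k l m n shape; lra.
Qed.
End Probability.

Theorem mainTheorem13 :
  (~ exists (Q : finType) (inp : 'I_4 -> Q) (delta : option Q -> Q -> option Q -> Q)
       (A : {set Q}),
       injective inp /\ daca_recognizes inp delta A inL /\
       daca_time inp delta A (fun _ => 3))
  /\
  (exists (Q : finType) (inp : 'I_4 -> Q) (d0 d1 : option Q -> Q -> option Q -> Q)
       (A : {set Q}),
       injective inp /\ paca_one_sided inp d0 d1 A (7%:R / 8%:R)%R inL /\
       paca_time inp d0 d1 A (fun _ => 3)).
Proof.
split; first exact: no_daca_time3.
exists (pstate : finType), pinp, (pdelta false), (pdelta true), pacc.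
by split; [exact: pinp_inj | split; [exact: paca_one_sided_7_8 | exact: paca_time3]].
Qed.
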